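(* Let $W:[Q]^2\to([Q]\cup\{\phi\})^2$ be any function and $n\ge1$. If $s$ is the maximum size of a bipartite independent set in $G_{W,1}$, then the maximum size of a bipartite independent set in $G_{W,n}$ is $s^n$.
   Context: Fix an integer $q\ge1$, $Q=2^q$, $[Q]=\{1,\dots,Q\}$, and a symbol $\phi\notin[Q]$. $G_{W,n}$ is the bipartite graph whose two sides are two copies of $[Q]^n$, with $x^{(n)}=(x_1,\dots,x_n)$ (left) adjacent to $y^{(n)}=(y_1,\dots,y_n)$ (right) iff there is an index $i$ with $W(x_i,y_i)=(\phi,\phi)$. In a bipartite graph with sides $X,Y$, a bipartite independent set (BPIS) is a pair $(A,B)$ with $A\subseteq X$, $B\subseteq Y$ and no edge between $A$ and $B$; its size is $|A|\cdot|B|$. *)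

From mathcomp Require Import all_boot.
Set Implicit Arguments. Unset Strict Implicit. Unset Printing Implicit Defensive.

(* [Q] is modelled by 'I_Q (0-based); [Q] ∪ {phi} by option 'I_Q with
   phi = None.  W : [Q]^2 -> ([Q] ∪ {phi})^2 is curried. *)
Definition phi_sym {Q : nat} : option 'I_Q := None.

(* vertices of G_{W,n} (on either side): words in [Q]^n *)
Definition word (Q n : nat) := {ffun 'I_n -> 'I_Q}.

Definition GW_adj (Q : nat) (W : 'I_Q -> 'I_Q -> option 'I_Q * option 'I_Q)
  (n : nat) (x y : word Q n) : bool :=
  [exists i : 'I_n, W (x i) (y i) == (phi_sym, phi_sym)].

Definition is_BPIS (Q : nat) (W : 'I_Q -> 'I_Q -> option 'I_Q * option 'I_Q)
  (n : nat) (A B : {set word Q n}) : bool :=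
  [forall x in A, forall y in B, ~~ GW_adj W x y].

Definition max_BPIS (Q : nat) (W : 'I_Q -> 'I_Q -> option 'I_Q * option 'I_Q)
  (n : nat) : nat :=
  \max_(AB : {set word Q n} * {set word Q n} | is_BPIS W AB.1 AB.2)
     (#|AB.1| * #|AB.2|).

From mathcomp Require Import all_boot.

(* Two words x, y are non-adjacent in G_{W,n} iff every coordinate pair
   (x i, y i) is a "compatible" pair of letters, i.e. W (x i) (y i) is not
   (phi, phi).  Hence:
   - upper bound: if (A, B) is a BPIS of G_{W,n}, then for each coordinate i
     the projections A_i, B_i form a compatible pair of letter sets, which
     is a BPIS of G_{W,1} (of size <= s); and A, B lie in the boxes
     A_1 x ... x A_n, B_1 x ... x B_n, so |A||B| <= prod_i |A_i||B_i| <= s^n;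
   - lower bound: for an optimal compatible pair (C, D) the boxes C^n, D^n
     form a BPIS of G_{W,n} of size (|C||D|)^n >= s^n.
   Nothing depends on the alphabet size being a power of two, so all the
   lemmas are stated for an arbitrary alphabet 'I_Q. *)

Set Implicit Arguments.
Unset Strict Implicit.
Unset Printing Implicit Defensive.

Section Tensorisation.

Variable Q : nat.
Variable W : 'I_Q -> 'I_Q -> option 'I_Q * option 'I_Q.

(* Two letter sets are compatible when no pair of their letters is mapped
   to (phi, phi); these are the one-coordinate independent sets. *)
Definition compatible (C D : {set 'I_Q}) : bool :=
  [forall a in C, forall b in D, W a b != (phi_sym, phi_sym)].

Definition proj n (A : {set word Q n}) (i : 'I_n) : {set 'I_Q} :=
  [set (x : word Q n) i | x in A].

Definition box n (F : 'I_n -> {set 'I_Q}) : {set word Q n} :=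
  [set x : word Q n | [forall i, x i \in F i]].

Lemma card_box n (F : 'I_n -> {set 'I_Q}) : #|box F| = \prod_i #|F i|.
Proof.
have -> : #|box F| = #|family F| by apply: eq_card => x; rewrite inE.
by rewrite card_family foldrE big_map big_enum.
Qed.

Lemma sub_box_proj n (A : {set word Q n}) : A \subset box (proj A).
Proof.
apply/subsetP => x xA; rewrite inE; apply/forallP => i.
by apply/imsetP; exists x.
Qed.

Lemma card_le_proj n (A B : {set word Q n}) :
  #|A| * #|B| <= \prod_i (#|proj A i| * #|proj B i|).
Proof.
rewrite big_split /= -!card_box.
by apply: leq_mul; apply/subset_leq_card/sub_box_proj.
Qed.

Lemma BPIS_proj_compatible n (A B : {set word Q n}) i :
  is_BPIS W A B -> compatible (proj A i) (proj B i).
Proof.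
move/forallP=> indepAB; apply/forallP => a; apply/implyP => /imsetP [x xA ->].
apply/forallP => b; apply/implyP => /imsetP [y yB ->].
have := indepAB x; rewrite xA /= => /forallP /(_ y).
by rewrite yB /= /GW_adj negb_exists => /forallP /(_ i).
Qed.

Lemma box_BPIS n (F G : 'I_n -> {set 'I_Q}) :
  (forall i, compatible (F i) (G i)) -> is_BPIS W (box F) (box G).
Proof.
move=> compFG; apply/forallP => x; apply/implyP; rewrite inE => /forallP Fx.
apply/forallP => y; apply/implyP; rewrite inE => /forallP Gy.
rewrite /GW_adj negb_exists; apply/forallP => i.
have /forallP /(_ (x i)) := compFG i; rewrite Fx /= => /forallP /(_ (y i)).
by rewrite Gy.
Qed.

Lemma BPIS_le_max n (A B : {set word Q n}) :
  is_BPIS W A B -> #|A| * #|B| <= max_BPIS W n.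
Proof.
by move=> indepAB; apply: (@leq_bigmax_cond _ _ _ (A, B)).
Qed.

(* The maximum is attained (the empty pair is always a BPIS). *)
Lemma max_BPIS_attained n :
  exists2 AB : {set word Q n} * {set word Q n},
    is_BPIS W AB.1 AB.2 & max_BPIS W n = #|AB.1| * #|AB.2|.
Proof.
have indep0 : is_BPIS W (set0 : {set word Q n}) set0.
  by apply/forallP => x; rewrite in_set0.
have [AB indepAB maxAB] := @eq_bigmax_cond _
  (fun AB : {set word Q n} * {set word Q n} => is_BPIS W AB.1 AB.2)
  (fun AB => #|AB.1| * #|AB.2|)
  (ltac:(by apply/card_gt0P; exists (set0, set0))).
by exists AB => //; exact: maxAB.
Qed.

Lemma compatible_le_max1 C D : compatible C D -> #|C| * #|D| <= max_BPIS W 1.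
Proof.
move=> compCD.
have := BPIS_le_max (box_BPIS (fun _ : 'I_1 => compCD)).
by rewrite !card_box !big_ord1.
Qed.

Lemma max1_compatible :
  exists C D, compatible C D /\ max_BPIS W 1 <= #|C| * #|D|.
Proof.
have [[A B] /= indepAB ->] := max_BPIS_attained 1.
exists (proj A ord0), (proj B ord0); split; first exact: BPIS_proj_compatible.
by apply: leq_trans (card_le_proj A B) _; rewrite big_ord1.
Qed.

Lemma max_BPIS_upper n : max_BPIS W n <= max_BPIS W 1 ^ n.
Proof.
apply/bigmax_leqP => [[A B]] /= indepAB.
apply: leq_trans (card_le_proj A B) _.
rewrite -[n in _ ^ n]card_ord -prod_nat_const.
by apply: leq_prod => i _; apply/compatible_le_max1/BPIS_proj_compatible.
Qed.

Lemma max_BPIS_lower n : max_BPIS W 1 ^ n <= max_BPIS W n.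
Proof.
have [C [D [compCD le_s_CD]]] := max1_compatible.
have boxes := BPIS_le_max (box_BPIS (fun _ : 'I_n => compCD)).
rewrite !card_box !prod_nat_const card_ord -expnMn in boxes.
apply: leq_trans boxes.
by case: n => // n; rewrite leq_exp2r.
Qed.

End Tensorisation.

Theorem mainTheorem6 (q : nat) (hq : 1 <= q)
  (W : 'I_(2 ^ q) -> 'I_(2 ^ q) -> option 'I_(2 ^ q) * option 'I_(2 ^ q))
  (n : nat) (hn : 1 <= n) (s : nat) (hs : s = max_BPIS W 1) :
  max_BPIS W n = s ^ n.
Proof.
by rewrite hs; apply/eqP; rewrite eqn_leq max_BPIS_upper max_BPIS_lower.
Qed.
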